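(* Let $n\ge 2$. For $p\in(0,1)$ let $\mathfrak p$ be the geometric distribution $p_i=(1-p)p^{i-1}$, $i\in\mathbb N$, and let $d(p)$ be the Hausdorff dimension of $\Pi_{\mathfrak p}(n)=\pi_{\mathfrak p}(\{1,\dots,n\}^{\mathbb N})$. Then $d(p)$ is the unique solution $d$ of $(1-p^{dn})(1-p)^d/(1-p^d)=1$, and as $p$ ranges over $(0,1)$, $d(p)$ attains every value in $(0,1)$.
   Context: $\mathbb N=\{1,2,3,\dots\}$. For a probability distribution $\mathfrak p=(p_i)$ with all $p_i\in(0,1)$ and $\sum_i p_i=1$, set $\widehat{p_1}=0$, $\widehat{p_k}=\sum_{i=1}^{k-1}p_i$ for $k\ge2$, $T_k x=p_kx+\widehat{p_k}$, and $\pi_{\mathfrak p}((n_j))=\lim_{j\to\infty}T_{n_1}\circ\cdots\circ T_{n_j}(0)=\widehat{p_{n_1}}+\sum_{j=1}^\infty p_{n_1}\cdots p_{n_j}\widehat{p_{n_{j+1}}}$, a map $\mathbb N^{\mathbb N}\to[0,1)$. *)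

From Stdlib Require Import Reals.
Open Scope R_scope.

(* A probability vector is a map pp : nat -> R, with pp i = p_i for i >= 1
   (the value at 0 is irrelevant). *)

(* phat pp k = sum_{i=1}^{k-1} pp i   (so phat pp 1 = 0; phat pp 0 := 0). *)
Fixpoint phat (pp : nat -> R) (k : nat) : R :=
  match k with
  | O => 0
  | S k' => match k' with
            | O => 0
            | _ => phat pp k' + pp k'
            end
  end.

Definition Tmap (pp : nat -> R) (k : nat) (x : R) : R := pp k * x + phat pp k.

(* Tcomp pp w m x = T_{w 0} o T_{w 1} o ... o T_{w m} (x).
   The word (n_1, n_2, ...) of the paper is w 0, w 1, ... *)
Fixpoint Tcomp (pp : nat -> R) (w : nat -> nat) (m : nat) (x : R) : R :=
  match m with
  | O => Tmap pp (w O) x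
  | S m' => Tcomp pp w m' (Tmap pp (w (S m')) x)
  end.

Definition pi_p (pp : nat -> R) (w : nat -> nat) (x : R) : Prop :=
  Un_cv (fun m => Tcomp pp w m 0) x.

Definition Pi_set (pp : nat -> R) (n : nat) (x : R) : Prop :=
  exists w : nat -> nat, (forall j, (1 <= w j <= n)%nat) /\ pi_p pp w x.

Definition geom (p : R) (i : nat) : R := (1 - p) * p ^ (i - 1).

(* r^s with the convention 0^s = 0 (only used for s > 0). *)
Definition pw (r s : R) : R := if Rle_dec r 0 then 0 else Rpower r s.

Definition diam_cover (E : R -> Prop) (U : nat -> R -> Prop) (r : nat -> R) : Prop :=
  (forall x, E x -> exists i, U i x) /\
  (forall i x y, U i x -> U i y -> Rabs (x - y) <= r i).

Definition Hnull (E : R -> Prop) (s : R) : Prop :=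
  forall delta eps, 0 < delta -> 0 < eps ->
    exists (U : nat -> R -> Prop) (r : nat -> R),
      diam_cover E U r /\ (forall i, 0 <= r i <= delta) /\
      (forall m, sum_f_R0 (fun i => pw (r i) s) m <= eps).

Definition hausdorff_dim (E : R -> Prop) (d : R) : Prop :=
  (forall s, 0 < s -> Hnull E s -> d <= s) /\
  (forall d', (forall s, 0 < s -> Hnull E s -> d' <= s) -> d' <= d).

Definition dim_eq (p : R) (n : nat) (d : R) : Prop :=
  (1 - Rpower p (d * INR n)) * Rpower (1 - p) d / (1 - Rpower p d) = 1.

(* For [r_j = (1-p) p^(j-1)] the maps [T_1, ..., T_n] are affine contractions of
   ratios [r_j], and [Pi_p(n)] is their attractor, coded by the infinite words over
   [{1, ..., n}].  Writing [F(s) = r_1^s + ... + r_n^s] ([sim_sum]), we follow the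
   classical Moran-Hutchinson argument:
   - upper bound: if [F(s) < 1], the cylinders of level [m] cover [Pi_p(n)] with
     total [s]-size [F(s)^m -> 0], hence [H^s = 0];
   - lower bound: if [F(d) = 1], the natural self-similar mass distribution
     (approximated level by level by [mass]) gives each interval [(a,b)] mass at most
     [C (b-a)^d], because the pieces [T_j [0, 1-p^n]] are separated by a fixed gap;
     with the compactness of [Pi_p(n)] (Koenig's lemma on the coding tree) every cover
     then has [sum diam^d >= 1/C], hence [H^s > 0] for [s < d].
   So the dimension is the unique root of [F(d) = 1], which is the dimension
   equation of the theorem once the geometric sum is evaluated.  Finally [F(t) > 1]
   for small [p], [F(t) < 1] for [p] near 1, and [F(t)] is continuous in [p], so the
   intermediate value theorem realises every [t] in (0,1) as a dimension. *)

From Stdlib Require Import Reals Lra Lia List Classical ClassicalEpsilon Ranalysis5.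
Import ListNotations.
Open Scope R_scope.

Definition lsum {A : Type} (l : list A) (f : A -> R) : R :=
  fold_right (fun x acc => f x + acc) 0 l.

Lemma lsum_app {A : Type} (l1 l2 : list A) f :
  lsum (l1 ++ l2) f = lsum l1 f + lsum l2 f.
Proof. induction l1; simpl; [ring | rewrite IHl1; ring]. Qed.

Lemma lsum_ext {A : Type} (l : list A) f g :
  (forall x, In x l -> f x = g x) -> lsum l f = lsum l g.
Proof. induction l; simpl; intros H; auto. rewrite H, IHl; auto. Qed.

Lemma lsum_le {A : Type} (l : list A) f g :
  (forall x, In x l -> f x <= g x) -> lsum l f <= lsum l g.
Proof.
  induction l; simpl; intros H; [lra |].
  pose proof (H a (or_introl eq_refl)). pose proof (IHl (fun x h => H x (or_intror h))). lra.
Qed.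

Lemma lsum_lt {A : Type} (l : list A) f g : l <> [] ->
  (forall x, In x l -> f x < g x) -> lsum l f < lsum l g.
Proof.
  induction l as [| a l IH]; intros Hl H; [congruence |]. simpl.
  pose proof (H a (or_introl eq_refl)). destruct l as [| b l]; simpl; [lra |].
  assert (lsum (b :: l) f < lsum (b :: l) g)
    by (apply IH; [congruence | intros; apply H; right; auto]).
  simpl in *. lra.
Qed.

Lemma lsum_nonneg {A : Type} (l : list A) f :
  (forall x, In x l -> 0 <= f x) -> 0 <= lsum l f.
Proof.
  induction l; simpl; intros H; [lra |].
  pose proof (H a (or_introl eq_refl)). pose proof (IHl (fun x h => H x (or_intror h))). lra.
Qed.

Lemma lsum_scal {A : Type} (l : list A) f c :
  lsum l (fun x => c * f x) = c * lsum l f.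
Proof. induction l; simpl; [ring | rewrite IHl; ring]. Qed.

Lemma lsum_map {A B : Type} (g : B -> A) (l : list B) f :
  lsum (map g l) f = lsum l (fun x => f (g x)).
Proof. induction l; simpl; auto. rewrite IHl; auto. Qed.

Lemma lsum_flat_map {A B : Type} (g : B -> list A) (l : list B) f :
  lsum (flat_map g l) f = lsum l (fun x => lsum (g x) f).
Proof. induction l; simpl; auto. rewrite lsum_app, IHl; auto. Qed.

Lemma lsum_pos_term {A : Type} (l : list A) f :
  0 < lsum l f -> exists x, In x l /\ 0 < f x.
Proof.
  induction l as [| a l IH]; simpl; intros H; [lra |].
  destruct (Rlt_dec 0 (f a)) as [Ha | Ha]; [exists a; auto |].
  destruct IH as [x [Hx Hfx]]; [lra | exists x; auto].
Qed.

Lemma lsum_single {A : Type} (l : list A) f h : NoDup l ->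
  (forall x, In x l -> 0 <= f x) ->
  (forall x y, In x l -> In y l -> 0 < f x -> 0 < f y -> x = y) ->
  (forall x, In x l -> f x <= h) -> 0 <= h -> lsum l f <= h.
Proof.
  induction l as [| a l IH]; simpl; intros Hnd Hnn Hu Hb Hh; [lra |].
  inversion Hnd; subst.
  destruct (Rle_lt_or_eq_dec 0 (f a) (Hnn a (or_introl eq_refl))) as [Hpos | Hz].
  - assert (lsum l f <= 0); [| pose proof (Hb a (or_introl eq_refl)); lra].
    apply Rle_trans with (lsum l (fun _ => 0)); [apply lsum_le | right; clear; induction l; simpl; lra].
    intros x Hx. destruct (Rle_lt_or_eq_dec 0 (f x) (Hnn x (or_intror Hx))) as [Hq | Hq]; [| lra].
    assert (a = x) by (apply Hu; auto). subst; contradiction.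
  - rewrite <- Hz, Rplus_0_l. apply IH; auto.
Qed.

Lemma sum_f_R0_lsum {A : Type} (l : list A) (f : nat -> A -> R) N :
  sum_f_R0 (fun i => lsum l (f i)) N = lsum l (fun x => sum_f_R0 (fun i => f i x) N).
Proof.
  induction N; simpl; auto. rewrite IHN. clear IHN.
  induction l; simpl; [ring | rewrite <- IHl; ring].
Qed.

Lemma sum_nth_le {A : Type} (l : list A) (x0 : A) f M :
  (forall x, In x l -> 0 <= f x) -> f x0 = 0 ->
  sum_f_R0 (fun i => f (nth i l x0)) M <= lsum l f.
Proof.
  revert M; induction l as [| a l IH]; intros M Hf H0.
  - simpl. rewrite (sum_eq_R0 _ M); [lra |]. intros [|i] _; exact H0.
  - assert (0 <= lsum l f) by (apply lsum_nonneg; auto with datatypes).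
    pose proof (Hf a (or_introl eq_refl)).
    destruct M as [| M]; [simpl; lra |].
    rewrite decomp_sum by lia. simpl.
    specialize (IH M (fun x h => Hf x (or_intror h)) H0). lra.
Qed.

Lemma lsum_seqS m f : lsum (seq 1 (S m)) f = lsum (seq 1 m) f + f (S m).
Proof. rewrite seq_S, lsum_app. simpl. ring. Qed.

Lemma pow_le1 x k : 0 <= x <= 1 -> x ^ k <= 1.
Proof. intros Hx. rewrite <- (pow1 k). apply pow_incr; lra. Qed.

Lemma pow_antimono x a b : 0 < x <= 1 -> (a <= b)%nat -> x ^ b <= x ^ a.
Proof.
  intros Hx Hab. replace b with (a + (b - a))%nat by lia. rewrite pow_add.
  assert (0 < x ^ a) by (apply pow_lt; lra).
  pose proof (pow_le1 x (b - a) ltac:(lra)). pose proof (pow_le x (b - a) ltac:(lra)). nra.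
Qed.

Lemma pow_eventually_small a e : 0 <= a < 1 -> 0 < e ->
  exists N, forall m, (m >= N)%nat -> a ^ m < e.
Proof.
  intros Ha He. destruct (pow_lt_1_zero a ltac:(rewrite Rabs_right; lra) e He) as [N HN].
  exists N. intros m Hm. specialize (HN m Hm).
  rewrite Rabs_right in HN; [exact HN | apply Rle_ge, pow_le; lra].
Qed.

Lemma Rpower_pos x s : 0 < Rpower x s.
Proof. apply exp_pos. Qed.

Lemma Rpower_base1 s : Rpower 1 s = 1.
Proof. unfold Rpower. rewrite ln_1, Rmult_0_r. apply exp_0. Qed.

Lemma Rpower_div x q s : 0 < x -> 0 < q -> Rpower (x / q) s = Rpower x s / Rpower q s.
Proof.
  intros. unfold Rdiv. rewrite <- Rpower_mult_distr by (auto; apply Rinv_0_lt_compat; auto).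
  f_equal. unfold Rpower. rewrite ln_Rinv, <- exp_Ropp by auto. f_equal. ring.
Qed.

Lemma Rpower_pow_base x k s : 0 < x -> Rpower (x ^ k) s = Rpower x s ^ k.
Proof.
  intros Hx. rewrite <- (Rpower_pow k (Rpower x s)) by apply Rpower_pos.
  rewrite Rpower_mult. unfold Rpower. rewrite ln_pow by auto. f_equal. ring.
Qed.

Lemma Rpower_antimono x s t : 0 < x <= 1 -> s <= t -> Rpower x t <= Rpower x s.
Proof.
  intros Hx Hst. unfold Rpower.
  assert (ln x <= 0).
  { destruct (Req_dec x 1) as [-> | Hne]; [rewrite ln_1; lra |].
    rewrite <- ln_1. left; apply ln_increasing; lra. }
  destruct (Req_dec (s * ln x) (t * ln x)) as [E | E]; [rewrite E; lra |].
  left; apply exp_increasing. nra.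
Qed.

Lemma Rpower_decr x s t : 0 < x < 1 -> s < t -> Rpower x t < Rpower x s.
Proof.
  intros Hx Hst. unfold Rpower.
  assert (ln x < 0) by (rewrite <- ln_1; apply ln_increasing; lra).
  apply exp_increasing. nra.
Qed.

Lemma pw_pos x s : 0 < x -> pw x s = Rpower x s.
Proof. intros. unfold pw. destruct (Rle_dec x 0); auto. lra. Qed.

Lemma pw_nonneg x s : 0 <= pw x s.
Proof. unfold pw. destruct (Rle_dec x 0); [lra | left; apply Rpower_pos]. Qed.

Lemma pw_zero s : pw 0 s = 0.
Proof. unfold pw. destruct (Rle_dec 0 0); lra. Qed.

Lemma Un_cv_interval u x A B : Un_cv u x ->
  (exists N, forall m, (m >= N)%nat -> A <= u m <= B) -> A <= x <= B.
Proof.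
  intros Hc [N HN].
  assert (Hclose : forall e, 0 < e -> exists m, A <= u m <= B /\ Rabs (u m - x) < e).
  { intros e He. destruct (Hc e He) as [N1 HN1].
    exists (max N N1). split; [apply HN | apply HN1]; lia. }
  split; apply Rnot_lt_le; intros Hlt.
  - destruct (Hclose (A - x)) as [m [Hm Hd]]; [lra |]. apply Rabs_def2 in Hd. lra.
  - destruct (Hclose (x - B)) as [m [Hm Hd]]; [lra |]. apply Rabs_def2 in Hd. lra.
Qed.

Lemma sum_ge_term f N i : (forall k, 0 <= f k) -> (i <= N)%nat -> f i <= sum_f_R0 f N.
Proof.
  intros Hf Hi. induction N.
  - replace i with O by lia. simpl. lra.
  - simpl. destruct (Nat.eq_dec i (S N)) as [-> | ne].
    + assert (0 <= sum_f_R0 f N) by (apply cond_pos_sum; auto). lra.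
    + pose proof (Hf (S N)). assert (f i <= sum_f_R0 f N) by (apply IHN; lia). lra.
Qed.

Lemma Hnull_of_interval_covers (E : R -> Prop) s :
  (forall delta eps, 0 < delta -> 0 < eps ->
     exists W : list (R * R),
       (forall x, E x -> exists ab, In ab W /\ fst ab <= x <= snd ab) /\
       (forall ab, In ab W -> 0 <= snd ab - fst ab <= delta) /\
       lsum W (fun ab => pw (snd ab - fst ab) s) <= eps) ->
  Hnull E s.
Proof.
  intros Hcov delta eps Hd He.
  destruct (Hcov delta eps Hd He) as [W [HW [Hlen Hsum]]].
  set (I := fun i => nth i W (0, 0)).
  exists (fun i x => fst (I i) <= x <= snd (I i)), (fun i => snd (I i) - fst (I i)).
  assert (Hlen' : forall i, 0 <= snd (I i) - fst (I i) <= delta).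
  { intros i. unfold I. destruct (Nat.lt_ge_cases i (length W)) as [Hi | Hi].
    - apply Hlen, nth_In, Hi.
    - rewrite nth_overflow by exact Hi. simpl. lra. }
  split; [split | split; [exact Hlen' |]].
  - intros x Hx. destruct (HW x Hx) as [ab [Hab Hx']].
    destruct (In_nth W ab (0, 0) Hab) as [i [_ Hi]]. exists i. unfold I. rewrite Hi. exact Hx'.
  - intros i x y Hx Hy. apply Rabs_le. lra.
  - intros M. eapply Rle_trans; [| exact Hsum].
    apply (sum_nth_le W (0, 0) (fun ab => pw (snd ab - fst ab) s)).
    + intros. apply pw_nonneg.
    + simpl. rewrite Rminus_diag. apply pw_zero.
Qed.

Lemma dyadic_sum_le tau N : 0 <= tau -> sum_f_R0 (fun i => tau / 2 ^ S i) N <= tau.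
Proof.
  intros Htau.
  assert (E : sum_f_R0 (fun i => tau / 2 ^ S i) N = tau * (1 - / 2 ^ S N)).
  { induction N; [simpl; field |]. rewrite tech5, IHN. simpl pow. field. apply pow_nonzero; lra. }
  rewrite E. assert (0 < / 2 ^ S N) by (apply Rinv_0_lt_compat, pow_lt; lra). nra.
Qed.

Lemma dyadic_radii s tau : 0 < s -> 0 < tau <= Rpower (1/4) s ->
  exists eta : nat -> R, forall i, 0 < eta i <= 1/4 /\ Rpower (eta i) s = tau / 2 ^ S i.
Proof.
  intros Hs Htau. exists (fun i => Rpower (tau / 2 ^ S i) (/ s)). intros i.
  assert (Hw : 0 < tau / 2 ^ S i) by (apply Rdiv_lt_0_compat; [lra | apply pow_lt; lra]).
  assert (Hwle : tau / 2 ^ S i <= Rpower (1/4) s).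
  { apply Rle_trans with tau; [| lra]. unfold Rdiv. rewrite <- (Rmult_1_r tau) at 2.
    apply Rmult_le_compat_l; [lra |]. rewrite <- Rinv_1.
    apply Rinv_le_contravar; [lra | apply pow_R1_Rle; lra]. }
  split; [split |].
  - apply Rpower_pos.
  - replace (1/4) with (Rpower (Rpower (1/4) s) (/ s))
      by (rewrite Rpower_mult, Rinv_r by lra; apply Rpower_1; lra).
    apply Rle_Rpower_l; [left; apply Rinv_0_lt_compat; lra | split; lra].
  - rewrite Rpower_mult, Rinv_l by lra. apply Rpower_1, Hw.
Qed.

(* Fattening a set of diameter [r <= 1/4] to an interval of length
   [4 max(r, eta)] costs at most a factor [4] in [s]-dimensional size, and
   passing from exponent [s] to a larger [d] only helps for lengths [<= 1]. *)
Lemma fattened_power s d r eta : 0 < s <= d -> s <= 1 -> 0 <= r <= 1/4 -> 0 < eta <= 1/4 ->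
  Rpower (4 * Rmax r eta) d <= 4 * (pw r s + Rpower eta s).
Proof.
  intros Hsd Hs1 Hr Heta. set (m := Rmax r eta).
  assert (Hm : 0 < m <= 1/4) by (unfold m, Rmax; destruct (Rle_dec r eta); lra).
  assert (H4 : Rpower 4 s <= 4)
    by (rewrite <- (Rpower_1 4) at 2 by lra; apply Rle_Rpower; lra).
  assert (Hms : Rpower m s <= pw r s + Rpower eta s).
  { pose proof (pw_nonneg r s). pose proof (Rpower_pos eta s).
    unfold m, Rmax. destruct (Rle_dec r eta); [lra |]. rewrite pw_pos by lra. lra. }
  apply Rle_trans with (Rpower (4 * m) s); [apply Rpower_antimono; lra |].
  rewrite <- Rpower_mult_distr by lra.
  pose proof (Rpower_pos 4 s). pose proof (Rpower_pos m s). nra.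
Qed.

Lemma lsum_continuity {A : Type} (l : list A) (f : A -> R -> R) x :
  (forall a, continuity_pt (f a) x) -> continuity_pt (fun s => lsum l (fun a => f a s)) x.
Proof.
  intros H. induction l as [| a l IH]; simpl.
  - apply continuity_pt_const. intros ? ?; reflexivity.
  - apply (continuity_pt_plus (f a) (fun s => lsum l (fun a => f a s))); auto.
Qed.

Lemma hausdorff_dim_unique E d d' : hausdorff_dim E d -> hausdorff_dim E d' -> d = d'.
Proof.
  intros [Hlow Hinf] [Hlow' Hinf']. apply Rle_antisym; [apply Hinf'; exact Hlow | apply Hinf; exact Hlow'].
Qed.

Section GeometricSystem.

Variable p : R.
Hypothesis Hp : 0 < p < 1.

Lemma geom_S k : geom p (S k) = (1 - p) * p ^ k.
Proof. unfold geom. do 2 f_equal. lia. Qed.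

Lemma geom_pos j : 0 < geom p j.
Proof. unfold geom. apply Rmult_lt_0_compat; [lra | apply pow_lt; lra]. Qed.

Lemma geom_le j : geom p j <= 1 - p.
Proof.
  unfold geom. pose proof (pow_le1 p (j - 1) ltac:(lra)).
  pose proof (pow_le p (j - 1) ltac:(lra)). nra.
Qed.

Lemma phat_geom k : phat (geom p) (S k) = 1 - p ^ k.
Proof.
  induction k; [simpl; ring |].
  change (phat (geom p) (S (S k))) with (phat (geom p) (S k) + geom p (S k)).
  rewrite IHk, geom_S. simpl. ring.
Qed.

Lemma Tmap_S k y : Tmap (geom p) (S k) y = (1 - p) * p ^ k * y + (1 - p ^ k).
Proof. unfold Tmap. rewrite phat_geom, geom_S. ring. Qed.

Variable n : nat.

Lemma Tmap_range j y : (1 <= j <= n)%nat -> 0 <= y <= 1 ->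
  0 <= Tmap (geom p) j y <= 1 - p ^ n.
Proof.
  intros Hj Hy. destruct j as [| k]; [lia |]. rewrite Tmap_S.
  pose proof (pow_le1 p k ltac:(lra)). pose proof (pow_lt p k ltac:(lra)).
  pose proof (pow_antimono p (S k) n ltac:(lra) ltac:(lia)). simpl pow in *.
  assert (0 <= (1 - p) * p ^ k * y) by (apply Rmult_le_pos; [apply Rmult_le_pos |]; lra).
  assert ((1 - p) * p ^ k * y <= (1 - p) * p ^ k * 1)
    by (apply Rmult_le_compat_l; [apply Rmult_le_pos |]; lra).
  lra.
Qed.

(* Separation: the image of the attractor's hull [[0, 1 - p^n]] under [T_j]
   lies at distance at least [gap] to the left of the image of [[0,1]] under
   any [T_j'] with [j < j']. *)
Definition gap : R := (1 - p) * p ^ (n - 1) * p ^ n.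

Lemma gap_pos : 0 < gap.
Proof. unfold gap. repeat apply Rmult_lt_0_compat; try lra; apply pow_lt; lra. Qed.

Lemma gap_lt1 : gap < 1.
Proof.
  unfold gap. pose proof (pow_le1 p (n - 1) ltac:(lra)). pose proof (pow_le1 p n ltac:(lra)).
  pose proof (pow_le p (n - 1) ltac:(lra)). pose proof (pow_le p n ltac:(lra)).
  assert (p ^ (n - 1) * p ^ n <= 1) by nra. nra.
Qed.

Lemma Tmap_separated j j' y z : (1 <= j < j')%nat -> (j' <= n)%nat ->
  0 <= y <= 1 - p ^ n -> 0 <= z <= 1 -> gap <= Tmap (geom p) j' z - Tmap (geom p) j y.
Proof.
  intros Hj Hj' Hy Hz. destruct j as [| k]; [lia |]. destruct j' as [| k']; [lia |].
  rewrite !Tmap_S. unfold gap.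
  assert (0 < p ^ k) by (apply pow_lt; lra).
  pose proof (pow_antimono p (S k) k' ltac:(lra) ltac:(lia)).
  pose proof (pow_antimono p k (n - 1) ltac:(lra) ltac:(lia)).
  assert (0 < p ^ n) by (apply pow_lt; lra).
  assert (0 <= (1 - p) * p ^ k' * z)
    by (apply Rmult_le_pos; [apply Rmult_le_pos |]; try lra; apply pow_le; lra).
  assert ((1 - p) * p ^ k * y <= (1 - p) * p ^ k * (1 - p ^ n))
    by (apply Rmult_le_compat_l; [apply Rmult_le_pos |]; lra).
  assert ((1 - p) * p ^ (n - 1) * p ^ n <= (1 - p) * p ^ k * p ^ n)
    by (apply Rmult_le_compat_r; [lra | apply Rmult_le_compat_l; lra]).
  simpl pow in *. lra.
Qed.

Definition Tinv (j : nat) (x : R) : R := (x - phat (geom p) j) / geom p j.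

Lemma Tinv_lt j a y : Tinv j a < y <-> a < Tmap (geom p) j y.
Proof.
  unfold Tinv, Tmap. pose proof (geom_pos j).
  assert (E : (a - phat (geom p) j) / geom p j * geom p j = a - phat (geom p) j) by (field; lra).
  split; intros H'; nra.
Qed.

Lemma lt_Tinv j b y : y < Tinv j b <-> Tmap (geom p) j y < b.
Proof.
  unfold Tinv, Tmap. pose proof (geom_pos j).
  assert (E : (b - phat (geom p) j) / geom p j * geom p j = b - phat (geom p) j) by (field; lra).
  split; intros H'; nra.
Qed.

Lemma Tinv_sub j a b : Tinv j b - Tinv j a = (b - a) / geom p j.
Proof. unfold Tinv. pose proof (geom_pos j). field. lra. Qed.

Definition Tword (u : list nat) (x : R) : R := fold_right (Tmap (geom p)) x u.
Definition ratio (u : list nat) : R := fold_right (fun j acc => geom p j * acc) 1 u.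

Lemma Tword_cons j u x : Tword (j :: u) x = Tmap (geom p) j (Tword u x).
Proof. reflexivity. Qed.

Lemma Tword_app u v x : Tword (u ++ v) x = Tword u (Tword v x).
Proof. apply fold_right_app. Qed.

Lemma Tword_affine u y : Tword u y = Tword u 0 + ratio u * y.
Proof.
  induction u as [| j u IH]; simpl; [ring |].
  change (fold_right (Tmap (geom p)) y u) with (Tword u y).
  change (fold_right (Tmap (geom p)) 0 u) with (Tword u 0).
  unfold Tmap. rewrite IH. ring.
Qed.

Lemma ratio_app u v : ratio (u ++ v) = ratio u * ratio v.
Proof. induction u; simpl; [ring | rewrite IHu; ring]. Qed.

Lemma ratio_pos u : 0 < ratio u.
Proof. induction u; simpl; [lra | apply Rmult_lt_0_compat; auto; apply geom_pos]. Qed.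

Lemma ratio_le u : ratio u <= (1 - p) ^ length u.
Proof.
  induction u; simpl; [lra |].
  apply Rmult_le_compat; auto; [left; apply geom_pos | left; apply ratio_pos | apply geom_le].
Qed.

Definition in_cyl (u : list nat) (x : R) : Prop := Tword u 0 <= x <= Tword u 0 + ratio u.

Lemma Tword_in_cyl u y : 0 <= y <= 1 -> in_cyl u (Tword u y).
Proof. intros Hy. unfold in_cyl. rewrite (Tword_affine u y). pose proof (ratio_pos u). nra. Qed.

Definition valid (u : list nat) : Prop := Forall (fun j => (1 <= j <= n)%nat) u.
Definition admissible (w : nat -> nat) : Prop := forall j, (1 <= w j <= n)%nat.

Lemma Tword_range u y : valid u -> 0 <= y <= 1 -> 0 <= Tword u y <= 1.
Proof.
  intros Hv Hy. induction Hv as [| j u Hj Hv IH]; [exact Hy |]. rewrite Tword_cons.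
  pose proof (Tmap_range j (Tword u y) Hj IH). pose proof (pow_lt p n ltac:(lra)). lra.
Qed.

Fixpoint pref (w : nat -> nat) (k : nat) : list nat :=
  match k with O => [] | S k => pref w k ++ [w k] end.

Lemma pref_length w k : length (pref w k) = k.
Proof. induction k; simpl; auto. rewrite length_app, IHk; simpl; lia. Qed.

Lemma pref_valid w k : admissible w -> valid (pref w k).
Proof. intros Hw. induction k; simpl; [constructor | apply Forall_app; split; auto]. Qed.

Lemma pref_extend w k j : admissible w -> exists t, pref w (k + j) = pref w k ++ t /\ valid t.
Proof.
  intros Hw. induction j as [| j [t [Et Ht]]].
  - exists []. rewrite Nat.add_0_r, app_nil_r. split; [reflexivity | constructor].
  - exists (t ++ [w (k + j)%nat]). replace (k + S j)%nat with (S (k + j)) by lia. simpl.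
    rewrite Et, app_assoc. split; [reflexivity | apply Forall_app; split; auto].
Qed.

Lemma Tcomp_pref w m x : Tcomp (geom p) w m x = Tword (pref w (S m)) x.
Proof.
  revert x; induction m; intros x; [reflexivity |].
  simpl Tcomp. rewrite IHm. change (pref w (S (S m))) with (pref w (S m) ++ [w (S m)]).
  rewrite Tword_app. reflexivity.
Qed.

Lemma Tcomp_in_cyl w k m : admissible w -> (k <= S m)%nat ->
  in_cyl (pref w k) (Tcomp (geom p) w m 0).
Proof.
  intros Hw Hk. rewrite Tcomp_pref. replace (S m) with (k + (S m - k))%nat by lia.
  destruct (pref_extend w k (S m - k) Hw) as [t [-> Ht]].
  rewrite Tword_app. apply Tword_in_cyl, Tword_range; auto; lra.
Qed.

Lemma pi_p_in_cyl w x k : admissible w -> pi_p (geom p) w x -> in_cyl (pref w k) x.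
Proof.
  intros Hw Hc. apply (Un_cv_interval _ _ _ _ Hc). exists k. intros m Hm.
  apply Tcomp_in_cyl; auto; lia.
Qed.

(* The projection is defined on every admissible word: the approximants form a
   Cauchy sequence because they stay in cylinders of lengths at most [(1-p)^k]. *)
Lemma pi_p_exists w : admissible w -> exists x, pi_p (geom p) w x.
Proof.
  intros Hw.
  assert (Hcauchy : Cauchy_crit (fun m => Tcomp (geom p) w m 0)).
  { intros e He. destruct (pow_eventually_small (1 - p) e ltac:(lra) He) as [N HN]. exists N.
    intros a b Ha Hb. pose proof (Tcomp_in_cyl w N a Hw ltac:(lia)) as Ca.
    pose proof (Tcomp_in_cyl w N b Hw ltac:(lia)) as Cb. unfold in_cyl in Ca, Cb.
    pose proof (ratio_le (pref w N)). rewrite pref_length in H. specialize (HN N (le_n _)).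
    unfold R_dist. apply Rabs_def1; lra. }
  destruct (R_complete _ Hcauchy) as [x Hx]. exists x; exact Hx.
Qed.

Lemma Pi_set_in_cyl x k : Pi_set (geom p) n x -> exists u, valid u /\ length u = k /\ in_cyl u x.
Proof.
  intros [w [Hw Hx]]. exists (pref w k).
  split; [apply pref_valid | split; [apply pref_length | apply pi_p_in_cyl]]; auto.
Qed.

Definition sim_sum (s : R) : R := lsum (seq 1 n) (fun j => Rpower (geom p j) s).

Fixpoint words (m : nat) : list (list nat) :=
  match m with
  | O => [[]]
  | S m => flat_map (fun j => map (cons j) (words m)) (seq 1 n)
  end.

Lemma valid_in_words u : valid u -> In u (words (length u)).
Proof.
  induction 1; simpl; [auto |]. apply in_flat_map. exists x.
  split; [apply in_seq; lia | apply in_map; auto].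
Qed.

Lemma words_length m u : In u (words m) -> length u = m.
Proof.
  revert u; induction m; simpl; intros u Hu.
  - destruct Hu as [<- | []]. reflexivity.
  - apply in_flat_map in Hu. destruct Hu as [j [_ Hu]]. apply in_map_iff in Hu.
    destruct Hu as [v [<- Hv]]. simpl. f_equal. apply IHm, Hv.
Qed.

Lemma lsum_words s m : lsum (words m) (fun u => Rpower (ratio u) s) = sim_sum s ^ m.
Proof.
  induction m; simpl; [rewrite Rpower_base1; ring |].
  rewrite lsum_flat_map. unfold sim_sum at 1. rewrite Rmult_comm, <- lsum_scal.
  apply lsum_ext. intros j _. rewrite lsum_map, <- IHm, Rmult_comm, <- lsum_scal.
  apply lsum_ext. intros u _. simpl.
  rewrite Rpower_mult_distr; auto; [apply geom_pos | apply ratio_pos].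
Qed.

Lemma sim_sum_nonneg s : 0 <= sim_sum s.
Proof. apply lsum_nonneg. intros. left; apply Rpower_pos. Qed.

(* Upper bound: [F(s) < 1] forces [H^s(Pi_p(n)) = 0], using the covers by the
   cylinders of a fixed, large enough level. *)
Lemma upper_bound s : sim_sum s < 1 -> Hnull (Pi_set (geom p) n) s.
Proof.
  intros HF. apply Hnull_of_interval_covers. intros delta eps Hd He.
  destruct (pow_eventually_small _ _ (conj (sim_sum_nonneg s) HF) He) as [N1 HN1].
  destruct (pow_eventually_small (1 - p) delta ltac:(lra) Hd) as [N2 HN2].
  set (m := max N1 N2).
  exists (map (fun u => (Tword u 0, Tword u 0 + ratio u)) (words m)).
  split; [| split].
  - intros x Hx. destruct (Pi_set_in_cyl x m Hx) as [u [Hv [Hl Hu]]].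
    exists (Tword u 0, Tword u 0 + ratio u). split; [| exact Hu].
    apply (in_map (fun u => (Tword u 0, Tword u 0 + ratio u))).
    rewrite <- Hl. apply valid_in_words, Hv.
  - intros ab Hab. apply in_map_iff in Hab. destruct Hab as [u [<- Hu]]. simpl.
    pose proof (ratio_le u). pose proof (ratio_pos u). rewrite (words_length m u Hu) in H.
    specialize (HN2 m ltac:(unfold m; lia)). lra.
  - apply Rle_trans with (sim_sum s ^ m); [| left; apply HN1; unfold m; lia].
    rewrite lsum_map, <- (lsum_words s m). apply Req_le, lsum_ext. intros u _. simpl.
    replace (Tword u 0 + ratio u - Tword u 0) with (ratio u) by ring.
    apply pw_pos, ratio_pos.
Qed.

Definition inside (u : list nat) (a b : R) : Prop := a < Tword u 0 /\ Tword u 0 + ratio u < b.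

Lemma inside_cons j u a b : inside (j :: u) a b -> inside u (Tinv j a) (Tinv j b).
Proof.
  unfold inside. simpl ratio. rewrite Tword_cons.
  replace (Tmap (geom p) j (Tword u 0) + geom p j * ratio u)
    with (Tmap (geom p) j (Tword u 0 + ratio u)) by (unfold Tmap; ring).
  rewrite Tinv_lt, lt_Tinv. tauto.
Qed.

Lemma inside_app u t a b : valid t -> inside u a b -> inside (u ++ t) a b.
Proof.
  intros Ht [H1 H2]. unfold inside. rewrite Tword_app, ratio_app, (Tword_affine u).
  pose proof (Tword_range t 0 Ht ltac:(lra)). pose proof (Tword_range t 1 Ht ltac:(lra)).
  rewrite (Tword_affine t 1) in H0. pose proof (ratio_pos u). pose proof (ratio_pos t).
  split; nra.
Qed.

Section Konig.

Variable P : list nat -> Prop.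
Hypothesis P_valid : forall u, P u -> valid u.
Hypothesis P_prefix : forall u t, P (u ++ t) -> P u.

Definition extendable (u : list nat) : Prop := forall k, exists t, length t = k /\ P (u ++ t).

Lemma no_extension_mono v k k' : (k <= k')%nat ->
  (forall t, length t = k -> ~ P (v ++ t)) -> forall t, length t = k' -> ~ P (v ++ t).
Proof.
  intros Hk H t Ht HP. apply (H (firstn k t)); [rewrite length_firstn; lia |].
  apply (P_prefix _ (skipn k t)). rewrite <- app_assoc, firstn_skipn. exact HP.
Qed.

Lemma no_extension_uniform (vs : list (list nat)) :
  (forall v, In v vs -> ~ extendable v) ->
  exists K, forall v t, In v vs -> length t = K -> ~ P (v ++ t).
Proof.
  induction vs as [| v vs IH]; intros Hne; [exists O; intros v t [] |].
  destruct IH as [K HK]; [intros; apply Hne; right; auto |].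
  assert (Hv : exists k, forall t, length t = k -> ~ P (v ++ t)).
  { apply NNPP. intros Hno. apply (Hne v (or_introl eq_refl)). intros k.
    apply NNPP. intros Hk. apply Hno. exists k. intros t Ht HP. apply Hk. exists t; auto. }
  destruct Hv as [k Hk]. exists (max k K). intros v' t [<- | Hv'] Ht.
  - apply (no_extension_mono v k (max k K)); auto; lia.
  - apply (no_extension_mono v' K (max k K)); [lia | | exact Ht]. intros; apply HK; auto.
Qed.

(* Pigeonhole over the [n] letters: an extendable word has an extendable child. *)
Lemma extendable_step u : extendable u -> exists j, (1 <= j <= n)%nat /\ extendable (u ++ [j]).
Proof.
  intros Hu. apply NNPP. intros Hno.
  destruct (no_extension_uniform (map (fun j => u ++ [j]) (seq 1 n))) as [K HK].
  { intros v Hv. apply in_map_iff in Hv. destruct Hv as [j [<- Hj]]. apply in_seq in Hj.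
    intros Hext. apply Hno. exists j. split; [lia | exact Hext]. }
  destruct (Hu (S K)) as [[| j t] [Ht HP]]; [discriminate |].
  assert (Hj : (1 <= j <= n)%nat).
  { apply P_valid, Forall_app in HP. destruct HP as [_ Hv]. inversion Hv; auto. }
  apply (HK (u ++ [j]) t); [apply (in_map (fun j => u ++ [j])), in_seq; lia | simpl in Ht; lia |].
  rewrite <- app_assoc. exact HP.
Qed.

Lemma konig : extendable [] -> exists w, admissible w /\ forall k, P (pref w k).
Proof.
  intros H0.
  set (next := fun u => epsilon (inhabits 0%nat) (fun j => (1 <= j <= n)%nat /\ extendable (u ++ [j]))).
  assert (Hnext : forall u, extendable u -> (1 <= next u <= n)%nat /\ extendable (u ++ [next u]))
    by (intros u Hu; apply epsilon_spec, extendable_step, Hu).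
  set (path := fix path k := match k with O => [] | S k => path k ++ [next (path k)] end).
  assert (Hpath : forall k, extendable (path k)) by (induction k; [exact H0 | apply Hnext; auto]).
  exists (fun k => next (path k)). split; [intros k; apply Hnext, Hpath |].
  assert (Hpref : forall k, pref (fun k => next (path k)) k = path k)
    by (induction k; simpl; [reflexivity | rewrite IHk; reflexivity]).
  intros k. rewrite Hpref. destruct (Hpath k 0%nat) as [[| ? ?] [Ht HP]]; [| discriminate].
  rewrite app_nil_r in HP. exact HP.
Qed.

End Konig.

(* Compactness of [Pi_p(n)] in symbolic form: an open cover by intervals has a
   finite subcover [(a_i, b_i)], [i <= N], which moreover swallows whole
   cylinders of a common level [K]. *)
Lemma compact_cover (a b : nat -> R) :
  (forall x, Pi_set (geom p) n x -> exists i, a i < x < b i) ->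
  exists N K, forall u, valid u -> length u = K ->
    exists i, (i <= N)%nat /\ inside u (a i) (b i).
Proof.
  intros Hcov. apply NNPP. intros Hno.
  set (uncovered := fun u => valid u /\ ~ exists i, (i <= length u)%nat /\ inside u (a i) (b i)).
  destruct (konig uncovered) as [w [Hw Hunc]].
  - intros u Hu; apply Hu.
  - intros u t [Hv Hnot]. apply Forall_app in Hv. split; [apply Hv |].
    intros [i [Hi Hin]]. apply Hnot. exists i. split.
    + rewrite length_app. lia.
    + apply inside_app; [apply Hv | exact Hin].
  - intros k. apply NNPP. intros Hk. apply Hno. exists k, k. intros u Hu Hl.
    apply NNPP. intros Hnot. apply Hk. exists u. split; [exact Hl |]. split; [exact Hu |].
    simpl. rewrite Hl. exact Hnot.
  - destruct (pi_p_exists w Hw) as [x Hx].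
    destruct (Hcov x) as [i Hi]; [exists w; auto |].
    destruct (pow_eventually_small (1 - p) (Rmin (x - a i) (b i - x)) ltac:(lra))
      as [N HN]; [apply Rmin_glb_lt; lra |].
    set (k := max N i). specialize (HN k ltac:(unfold k; lia)).
    pose proof (pi_p_in_cyl w x k Hw Hx) as Hin.
    pose proof (ratio_le (pref w k)) as Hr. rewrite pref_length in Hr.
    pose proof (Rmin_l (x - a i) (b i - x)). pose proof (Rmin_r (x - a i) (b i - x)).
    destruct (Hunc k) as [_ Hnot]. apply Hnot. exists i. rewrite pref_length.
    split; [unfold k; lia |]. unfold in_cyl in Hin. unfold inside. lra.
Qed.

Section MassDistribution.

Variable d : R.
Hypothesis Hd : 0 <= d.
Hypothesis Hroot : sim_sum d = 1.

(* [mass K a b] is the level-[K] approximation of the natural self-similar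
   measure [mu] of the open interval [(a,b)]: at level 0 it is the indicator
   that [(a,b)] contains [[0,1]], and each level applies the self-similarity
   relation [mu = sum_j r_j^d (mu o T_j^-1)]. *)
Fixpoint mass (K : nat) (a b : R) : R :=
  match K with
  | O => if Rlt_dec a 0 then if Rlt_dec 1 b then 1 else 0 else 0
  | S K => lsum (seq 1 n) (fun j => Rpower (geom p j) d * mass K (Tinv j a) (Tinv j b))
  end.

Lemma mass_nonneg K a b : 0 <= mass K a b.
Proof.
  revert a b; induction K; intros a b; simpl.
  - destruct (Rlt_dec a 0); destruct (Rlt_dec 1 b); lra.
  - apply lsum_nonneg. intros j _. apply Rmult_le_pos; [left; apply Rpower_pos | apply IHK].
Qed.

Lemma mass_le1 K a b : mass K a b <= 1.
Proof.
  revert a b; induction K; intros a b; simpl.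
  - destruct (Rlt_dec a 0); destruct (Rlt_dec 1 b); lra.
  - rewrite <- Hroot. apply lsum_le. intros j _.
    pose proof (Rpower_pos (geom p j) d). pose proof (IHK (Tinv j a) (Tinv j b)).
    pose proof (mass_nonneg K (Tinv j a) (Tinv j b)). nra.
Qed.

Lemma mass_support K a b : 0 < mass K a b -> exists y, a < y < b /\ 0 <= y <= 1 - p ^ n.
Proof.
  revert a b; induction K; intros a b; simpl.
  - destruct (Rlt_dec a 0); destruct (Rlt_dec 1 b); try lra. intros _.
    exists 0. pose proof (pow_le1 p n ltac:(lra)). lra.
  - intros Hpos. destruct (lsum_pos_term _ _ Hpos) as [j [Hj Hterm]]. apply in_seq in Hj.
    pose proof (Rpower_pos (geom p j) d).
    destruct (IHK (Tinv j a) (Tinv j b)) as [y [[Hay Hyb] Hy]]; [nra |].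
    exists (Tmap (geom p) j y). rewrite <- Tinv_lt, <- lt_Tinv.
    pose proof (pow_lt p n ltac:(lra)). split; [lra | apply Tmap_range; [lia | lra]].
Qed.

Lemma mass_branch K a b j : 0 < Rpower (geom p j) d * mass K (Tinv j a) (Tinv j b) ->
  exists y, a < Tmap (geom p) j y < b /\ 0 <= y <= 1 - p ^ n.
Proof.
  intros Hterm. pose proof (Rpower_pos (geom p j) d).
  destruct (mass_support K (Tinv j a) (Tinv j b)) as [y [[Hay Hyb] Hy]]; [nra |].
  exists y. rewrite <- Tinv_lt, <- lt_Tinv. auto.
Qed.

(* By separation, an interval shorter than [gap] receives mass from one branch at most. *)
Lemma short_interval_one_branch K a b j j' : b - a < gap ->
  In j (seq 1 n) -> In j' (seq 1 n) ->
  0 < Rpower (geom p j) d * mass K (Tinv j a) (Tinv j b) ->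
  0 < Rpower (geom p j') d * mass K (Tinv j' a) (Tinv j' b) -> j = j'.
Proof.
  intros Hab Hj Hj' Pj Pj'. apply in_seq in Hj, Hj'.
  destruct (mass_branch K a b j Pj) as [y [Hy Hy']].
  destruct (mass_branch K a b j' Pj') as [z [Hz Hz']].
  pose proof (pow_lt p n ltac:(lra)).
  destruct (Nat.lt_total j j') as [L | [L | L]]; auto; exfalso.
  - pose proof (Tmap_separated j j' y z ltac:(lia) ltac:(lia) Hy' ltac:(lra)). lra.
  - pose proof (Tmap_separated j' j z y ltac:(lia) ltac:(lia) Hz' ltac:(lra)). lra.
Qed.

Lemma mass_bound K a b : a < b -> mass K a b <= / Rpower gap d * Rpower (b - a) d.
Proof.
  pose proof gap_pos as Hg. pose proof gap_lt1 as Hg1.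
  pose proof (Rpower_pos gap d) as Hgd.
  assert (Hlong : forall x y, gap <= y - x -> 1 <= / Rpower gap d * Rpower (y - x) d).
  { intros x y Hxy. apply (Rmult_le_reg_l (Rpower gap d)); [exact Hgd |].
    rewrite <- Rmult_assoc, Rinv_r, Rmult_1_r, Rmult_1_l by lra.
    apply Rle_Rpower_l; lra. }
  revert a b; induction K as [| K IHK]; intros a b Hab;
    (destruct (Rle_or_lt gap (b - a)) as [Hc | Hc];
      [eapply Rle_trans; [apply mass_le1 | apply Hlong, Hc] |]).
  - simpl. destruct (Rlt_dec a 0); destruct (Rlt_dec 1 b); try lra.
    all: apply Rmult_le_pos; [left; apply Rinv_0_lt_compat, Hgd | left; apply Rpower_pos].
  - simpl. apply lsum_single.
    + apply seq_NoDup.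
    + intros j _. apply Rmult_le_pos; [left; apply Rpower_pos | apply mass_nonneg].
    + intros j j' Hj Hj'. apply (short_interval_one_branch K a b j j' Hc Hj Hj').
    + intros j _. pose proof (geom_pos j). pose proof (Rpower_pos (geom p j) d).
      assert (Hlt : Tinv j a < Tinv j b).
      { pose proof (Tinv_sub j a b). assert (0 < (b - a) / geom p j) by (apply Rdiv_lt_0_compat; lra). lra. }
      specialize (IHK _ _ Hlt). rewrite Tinv_sub, Rpower_div in IHK by lra.
      apply Rmult_le_compat_l with (r := Rpower (geom p j) d) in IHK; [| lra].
      eapply Rle_trans; [apply IHK | right; field; lra].
    + apply Rmult_le_pos; [left; apply Rinv_0_lt_compat, Hgd | left; apply Rpower_pos].
Qed.

Lemma cover_mass K (a b : nat -> R) N :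
  (forall u, valid u -> length u = K -> exists i, (i <= N)%nat /\ inside u (a i) (b i)) ->
  1 <= sum_f_R0 (fun i => mass K (a i) (b i)) N.
Proof.
  revert a b; induction K as [| K IHK]; intros a b Hcov.
  - destruct (Hcov [] (Forall_nil _) eq_refl) as [i [Hi [H1 H2]]]. simpl in H1, H2.
    assert (mass 0 (a i) (b i) = 1)
      by (simpl; destruct (Rlt_dec (a i) 0); destruct (Rlt_dec 1 (b i)); lra).
    eapply Rle_trans; [| apply (sum_ge_term _ N i); auto]; [lra |].
    intros; apply mass_nonneg.
  - simpl. rewrite sum_f_R0_lsum, <- Hroot. apply lsum_le. intros j Hj.
    rewrite (sum_eq _ (fun i => mass K (Tinv j (a i)) (Tinv j (b i)) * Rpower (geom p j) d))
      by (intros; ring).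
    rewrite <- scal_sum, <- (Rmult_1_r (Rpower (geom p j) d)) at 1.
    apply Rmult_le_compat_l; [left; apply Rpower_pos |].
    apply (IHK (fun i => Tinv j (a i)) (fun i => Tinv j (b i))). intros u Hu Hl.
    apply in_seq in Hj.
    destruct (Hcov (j :: u) ltac:(constructor; auto; lia) ltac:(simpl; lia)) as [i [Hi Hin]].
    exists i. split; [exact Hi | apply inside_cons, Hin].
Qed.

Lemma interval_cover_mass (a b : nat -> R) : (forall i, a i < b i) ->
  (forall x, Pi_set (geom p) n x -> exists i, a i < x < b i) ->
  exists N, 1 <= / Rpower gap d * sum_f_R0 (fun i => Rpower (b i - a i) d) N.
Proof.
  intros Hab Hcov. destruct (compact_cover a b Hcov) as [N [K HK]]. exists N.
  rewrite scal_sum. eapply Rle_trans; [apply (cover_mass K a b N HK) |].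
  apply sum_Rle. intros i _. rewrite Rmult_comm. apply mass_bound, Hab.
Qed.

(* Lower bound: [H^s(Pi_p(n)) > 0] for [s < d]. A cover with small
   [sum r_i^s] is fattened into open intervals whose total [d]-dimensional size
   is too small to satisfy [interval_cover_mass]. *)
Lemma lower_bound s : 0 < s < d -> d <= 1 -> ~ Hnull (Pi_set (geom p) n) s.
Proof.
  intros Hs Hd1 Hnull_s.
  set (C := / Rpower gap d).
  assert (HC : 0 < C) by (apply Rinv_0_lt_compat, Rpower_pos).
  set (tau := Rmin (Rpower (1/4) s) (/ (16 * C))).
  assert (Htau : 0 < tau <= Rpower (1/4) s).
  { split; [apply Rmin_glb_lt; [apply Rpower_pos | apply Rinv_0_lt_compat; lra] | apply Rmin_l]. }
  destruct (dyadic_radii s tau ltac:(lra) Htau) as [eta Heta].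
  destruct (Hnull_s (1/4) (/ (16 * C)) ltac:(lra) ltac:(apply Rinv_0_lt_compat; lra))
    as [U [r [[Hcov Hdiam] [Hr Hsum]]]].
  set (z := fun i => epsilon (inhabits 0) (U i)).
  set (m := fun i => Rmax (r i) (eta i)).
  assert (Hm : forall i, r i <= m i /\ 0 < m i).
  { intros i. unfold m. split; [apply Rmax_l |]. eapply Rlt_le_trans; [apply Heta | apply Rmax_r]. }
  destruct (interval_cover_mass (fun i => z i - 2 * m i) (fun i => z i + 2 * m i)) as [N HN].
  - intros i. pose proof (Hm i). lra.
  - intros x Hx. destruct (Hcov x Hx) as [i Hi]. exists i.
    assert (Hz : U i (z i)) by (apply epsilon_spec; exists x; exact Hi).
    pose proof (Hdiam i x (z i) Hi Hz) as Hxz.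
    pose proof (Rle_abs (x - z i)). pose proof (Rabs_minus_sym x (z i)).
    pose proof (Rle_abs (z i - x)). pose proof (Hm i). lra.
  - assert (Hsize : sum_f_R0 (fun i => Rpower (z i + 2 * m i - (z i - 2 * m i)) d) N
                    <= 4 * (/ (16 * C) + tau)).
    { apply Rle_trans with (sum_f_R0 (fun i => (pw (r i) s + tau / 2 ^ S i) * 4) N).
      - apply sum_Rle. intros i _.
        replace (z i + 2 * m i - (z i - 2 * m i)) with (4 * m i) by ring.
        rewrite <- (proj2 (Heta i)), (Rmult_comm _ 4).
        apply fattened_power; try lra; [apply Hr | apply Heta].
      - rewrite <- scal_sum, plus_sum. pose proof (Hsum N).
        pose proof (dyadic_sum_le tau N ltac:(lra)). lra. }
    assert (tau <= / (16 * C)) by apply Rmin_r.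
    apply Rmult_le_compat_l with (r := C) in Hsize; [| lra]. fold C in HN.
    replace (C * (4 * (/ (16 * C) + tau))) with (/4 + 4 * C * tau) in Hsize by (field; lra).
    assert (4 * C * tau <= / 4) by (apply Rle_trans with (4 * C * / (16 * C));
      [apply Rmult_le_compat_l; lra | right; field; lra]).
    lra.
Qed.

End MassDistribution.

Lemma sim_sum_0 : sim_sum 0 = INR n.
Proof.
  unfold sim_sum. induction n as [| k IH]; [reflexivity |].
  rewrite lsum_seqS, IH, S_INR, Rpower_O by apply geom_pos. reflexivity.
Qed.

Lemma sim_sum_1 : sim_sum 1 = 1 - p ^ n.
Proof.
  unfold sim_sum. induction n as [| k IH]; [simpl; ring |].
  rewrite lsum_seqS, IH, Rpower_1, geom_S by apply geom_pos. simpl. ring.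
Qed.

Lemma sim_sum_continuous s : continuity_pt sim_sum s.
Proof.
  apply (lsum_continuity _ (fun j s => Rpower (geom p j) s)). intros j. unfold Rpower. reg.
Qed.

Lemma sim_sum_decr s t : (1 <= n)%nat -> s < t -> sim_sum t < sim_sum s.
Proof.
  intros Hn Hst. apply lsum_lt; [destruct n; [lia | discriminate] |].
  intros j _. apply Rpower_decr; [| exact Hst].
  pose proof (geom_pos j). pose proof (geom_le j). lra.
Qed.

Lemma sim_sum_closed_form d : 0 < d ->
  sim_sum d = (1 - Rpower p (d * INR n)) * Rpower (1 - p) d / (1 - Rpower p d).
Proof.
  intros Hd. assert (Hr : Rpower p d < 1) by (rewrite <- (Rpower_O p) by lra; apply Rpower_decr; lra).
  rewrite <- Rpower_mult, Rpower_pow by apply Rpower_pos.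
  unfold sim_sum. induction n as [| k IH]; [simpl; field; lra |].
  rewrite lsum_seqS, IH, geom_S, <- Rpower_mult_distr, Rpower_pow_base by (try apply pow_lt; lra).
  simpl. field. lra.
Qed.

Lemma dim_eq_iff d : 0 < d -> (dim_eq p n d <-> sim_sum d = 1).
Proof. intros Hd. unfold dim_eq. rewrite sim_sum_closed_form by exact Hd. tauto. Qed.

Lemma sim_sum_root_exists : (2 <= n)%nat -> exists d, 0 < d /\ sim_sum d = 1.
Proof.
  intros Hn. assert (Hn2 : 2 <= INR n) by (apply (le_INR 2); exact Hn).
  destruct (IVT_interv (fun s => 1 - sim_sum s) 0 1) as [d [Hd E]].
  - intros a _. apply continuity_pt_minus; [apply continuity_pt_const; intros ? ?; auto |].
    apply sim_sum_continuous.
  - lra.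
  - rewrite sim_sum_0. lra.
  - rewrite sim_sum_1. pose proof (pow_lt p n ltac:(lra)). lra.
  - exists d. split; [| lra]. destruct (Req_dec d 0) as [-> | Hne]; [| lra].
    rewrite sim_sum_0 in E. lra.
Qed.

Lemma sim_sum_root_unique d d' : (1 <= n)%nat -> sim_sum d = 1 -> sim_sum d' = 1 -> d = d'.
Proof.
  intros Hn E E'. destruct (Rtotal_order d d') as [L | [L | L]]; auto;
    [pose proof (sim_sum_decr d d' Hn L) | pose proof (sim_sum_decr d' d Hn L)]; lra.
Qed.

Lemma hausdorff_dim_root d : (1 <= n)%nat -> 0 < d -> sim_sum d = 1 ->
  hausdorff_dim (Pi_set (geom p) n) d.
Proof.
  intros Hn Hd Hroot.
  assert (Hd1 : d <= 1).
  { apply Rnot_lt_le. intros Hlt. pose proof (sim_sum_decr 1 d Hn Hlt).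
    rewrite sim_sum_1 in H. pose proof (pow_lt p n ltac:(lra)). lra. }
  split.
  - intros s Hs Hnull_s. apply Rnot_lt_le. intros Hsd.
    apply (lower_bound d ltac:(lra) Hroot s); [lra | exact Hd1 | exact Hnull_s].
  - intros d' Hd'. apply Rnot_lt_le. intros Hlt.
    assert (Hs : Hnull (Pi_set (geom p) n) ((d + d') / 2)).
    { apply upper_bound. rewrite <- Hroot. apply sim_sum_decr; [exact Hn | lra]. }
    pose proof (Hd' ((d + d') / 2) ltac:(lra) Hs). lra.
Qed.

End GeometricSystem.

Lemma exp_neg1_lt_half : exp (Ropp 1) < / 2.
Proof. rewrite exp_Ropp. pose proof (exp_ineq1 1 ltac:(lra)). apply Rinv_lt_contravar; lra. Qed.

Lemma sim_sum_continuous_p n t p : 0 < p < 1 -> continuity_pt (fun q => sim_sum q n t) p.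
Proof.
  intros Hp. apply (lsum_continuity _ (fun j q => Rpower (geom q j) t)). intros j.
  apply (continuity_pt_comp (fun q => geom q j) (fun x => Rpower x t)).
  - unfold geom. reg.
  - apply derivable_continuous_pt. exists (t * Rpower (geom p j) (t - 1)).
    apply derivable_pt_lim_power, geom_pos, Hp.
Qed.

(* For small [p] the first two ratios alone give [F(t) > 1]: with
   [p = exp(-1/(1-t))] we have [(1-p) p^t > p], i.e. [r_1^t + r_2^t > 1]. *)
Lemma sim_sum_small_p n t : (2 <= n)%nat -> 0 < t < 1 ->
  exists q, 0 < q < / 2 /\ 1 < sim_sum q n t.
Proof.
  intros Hn Ht. set (q := exp (- / (1 - t))). exists q.
  pose proof exp_neg1_lt_half as Hexp1.
  assert (Hq : 0 < q < / 2).
  { split; [apply exp_pos |]. apply Rle_lt_trans with (exp (Ropp 1)); [| exact Hexp1].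
    assert (1 <= / (1 - t)) by (rewrite <- Rinv_1; apply Rinv_le_contravar; lra).
    unfold q. destruct (Req_dec (/ (1 - t)) 1) as [E | E]; [rewrite E; lra |].
    left; apply exp_increasing; lra. }
  assert (Htwo : Rpower (geom q 1) t + Rpower (geom q 2) t <= sim_sum q n t).
  { unfold sim_sum. destruct n as [| [| k]]; [lia | lia |]. simpl.
    pose proof (lsum_nonneg (seq 3 k) (fun j => Rpower (geom q j) t)
                  (fun j _ => Rlt_le _ _ (Rpower_pos _ _))). lra. }
  assert (H1 : Rpower (geom q 1) t >= 1 - q).
  { unfold geom. simpl. rewrite Rmult_1_r. apply Rle_ge.
    rewrite <- (Rpower_1 (1 - q)) at 1 by lra. apply Rpower_antimono; lra. }
  assert (H2 : Rpower (geom q 2) t = Rpower (geom q 1) t * Rpower q t).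
  { unfold geom. simpl. rewrite !Rmult_1_r, Rpower_mult_distr; lra. }
  assert (Hkey : q < (1 - q) * Rpower q t).
  { assert (E1 : Rpower q t = exp (t * - / (1 - t))) by (unfold Rpower, q; rewrite ln_exp; ring).
    assert (E2 : q = exp (t * - / (1 - t)) * exp (Ropp 1)).
    { unfold q. rewrite <- exp_plus. f_equal. field. lra. }
    rewrite E1, E2 at 1. rewrite (Rmult_comm (1 - q)).
    apply Rmult_lt_compat_l; [apply exp_pos | lra]. }
  split; [exact Hq |].
  pose proof (Rpower_pos q t). pose proof (Rpower_pos (geom q 1) t). nra.
Qed.

Lemma sim_sum_le_n p n t : 0 < p < 1 -> 0 <= t -> sim_sum p n t <= INR n * Rpower (1 - p) t.
Proof.
  intros Hp Ht. unfold sim_sum. induction n as [| k IH]; [simpl; lra |].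
  rewrite lsum_seqS, S_INR.
  assert (Rpower (geom p (S k)) t <= Rpower (1 - p) t)
    by (apply Rle_Rpower_l; [lra | split; [apply geom_pos | apply geom_le]; exact Hp]).
  lra.
Qed.

(* For [p] close to 1 every ratio is tiny: with [(1-p)^t = e^-n] we get
   [F(t) <= n e^-n < 1]. *)
Lemma sim_sum_large_p n t : (2 <= n)%nat -> 0 < t < 1 ->
  exists q, / 2 < q < 1 /\ sim_sum q n t < 1.
Proof.
  intros Hn Ht. exists (1 - exp (- (INR n / t))).
  assert (Hn2 : 2 <= INR n) by (apply (le_INR 2); exact Hn).
  assert (Hnt : 1 < INR n / t).
  { apply (Rmult_lt_reg_r t); [lra |]. unfold Rdiv. rewrite Rmult_assoc, Rinv_l; lra. }
  assert (Hq : / 2 < 1 - exp (- (INR n / t)) < 1).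
  { pose proof (exp_pos (- (INR n / t))). pose proof exp_neg1_lt_half.
    pose proof (exp_increasing (- (INR n / t)) (Ropp 1) ltac:(lra)). lra. }
  split; [exact Hq |].
  pose proof (sim_sum_le_n (1 - exp (- (INR n / t))) n t ltac:(lra) ltac:(lra)) as Hbound.
  assert (E : Rpower (1 - (1 - exp (- (INR n / t)))) t = exp (- INR n)).
  { unfold Rpower. replace (1 - (1 - exp (- (INR n / t)))) with (exp (- (INR n / t))) by ring.
    rewrite ln_exp. f_equal. field. lra. }
  assert (Hsmall : INR n * exp (- INR n) < 1).
  { rewrite exp_Ropp. apply (Rmult_lt_reg_r (exp (INR n))); [apply exp_pos |].
    rewrite Rmult_assoc, Rinv_l by (apply Rgt_not_eq, exp_pos).
    pose proof (exp_ineq1 (INR n) ltac:(lra)). lra. }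
  rewrite E in Hbound. lra.
Qed.

Lemma root_for_every_exponent n t : (2 <= n)%nat -> 0 < t < 1 ->
  exists p, 0 < p < 1 /\ sim_sum p n t = 1.
Proof.
  intros Hn Ht.
  destruct (sim_sum_small_p n t Hn Ht) as [q1 [Hq1 H1]].
  destruct (sim_sum_large_p n t Hn Ht) as [q2 [Hq2 H2]].
  destruct (IVT_interv (fun q => 1 - sim_sum q n t) q1 q2) as [p [Hp E]].
  - intros q Hq. apply continuity_pt_minus; [apply continuity_pt_const; intros ? ?; auto |].
    apply sim_sum_continuous_p. lra.
  - lra.
  - lra.
  - lra.
  - exists p. split; lra.
Qed.

Theorem mainTheorem5 (n : nat) (Hn : (2 <= n)%nat) :
  (forall p : R, 0 < p < 1 ->
     (exists d : R, 0 < d /\ dim_eq p n d /\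
        (forall d' : R, 0 < d' -> dim_eq p n d' -> d' = d)) /\
     (forall d : R, hausdorff_dim (Pi_set (geom p) n) d <-> (0 < d /\ dim_eq p n d))) /\
  (forall t : R, 0 < t < 1 ->
     exists p : R, 0 < p < 1 /\ hausdorff_dim (Pi_set (geom p) n) t).
Proof.
  assert (Hn1 : (1 <= n)%nat) by lia.
  split.
  - intros p Hp. destruct (sim_sum_root_exists p Hp n Hn) as [d0 [Hd0 Hroot]].
    pose proof (hausdorff_dim_root p Hp n d0 Hn1 Hd0 Hroot) as Hdim.
    split.
    + exists d0. split; [exact Hd0 | split; [apply dim_eq_iff; auto |]].
      intros d' Hd' Heq. apply dim_eq_iff in Heq; [| exact Hp | exact Hd'].
      exact (sim_sum_root_unique p Hp n d' d0 Hn1 Heq Hroot).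
    + intros d. split.
      * intros Hd. rewrite (hausdorff_dim_unique _ d d0 Hd Hdim).
        split; [exact Hd0 | apply dim_eq_iff; auto].
      * intros [Hd Heq]. apply dim_eq_iff in Heq; [| exact Hp | exact Hd].
        exact (hausdorff_dim_root p Hp n d Hn1 Hd Heq).
  - intros t Ht. destruct (root_for_every_exponent n t Hn Ht) as [p [Hp Hroot]].
    exists p. split; [exact Hp | exact (hausdorff_dim_root p Hp n t Hn1 ltac:(lra) Hroot)].
Qed.
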